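(* Let $\mathbb{F}$ be a field, $d\geq3$ and $V$ a vector space over $\mathbb{F}$ of dimension $d+1$. Let $E^*_0,\dots,E^*_d$ be a system of mutually orthogonal idempotents in $\mathrm{End}(V)$ and $A\in\mathrm{End}(V)$ with $E^*_iAE^*_j=0$ if $|i-j|>1$ and $E^*_iAE^*_j\neq0$ if $|i-j|=1$. Assume $A$ is multiplicity-free and bipartite with primitive idempotents $E_0,\dots,E_d$ and eigenvalues $\theta_0,\dots,\theta_d$. Let $\theta^*_0,\dots,\theta^*_d\in\mathbb{F}$ be mutually distinct and $A^*=\sum_i\theta^*_iE^*_i$. Assume $E_0$ is normalizing, $(E_0,E_1)$ is a tail, and $E_2$ is the vertex of $\Delta$ other than $E_0$ adjacent to $E_1$. Then for $1\le i\le d-1$, $$\theta_0(\theta^*_{i+1}-\theta^*_1)(\theta^*_{i-1}-\theta^*_1)+\theta_1(\theta^*_i-\theta^*_0)(\theta^*_{d-1}-\theta^*_{i+1}-\theta^*_{i-1}+\theta^*_1)-\theta_2(\theta^*_i-\theta^*_0)(\theta^*_d-\theta^*_i)=0.$$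
   Context: A system of mutually orthogonal idempotents: $E^*_iE^*_j=\delta_{ij}E^*_i$, $\operatorname{rank}E^*_i=1$. $A$ multiplicity-free: $d+1$ distinct eigenvalues in $\mathbb{F}$; $E_i$ is the projection onto the $\theta_i$-eigenspace along the other eigenspaces. Bipartite: $\operatorname{tr}(E^*_iA)=0$ for all $i$. $\Delta$: graph on $E_0,\dots,E_d$ with $E_i\neq E_j$ adjacent iff $E_iA^*E_j\neq0$. $(E_0,E_1)$ is a tail if $E_0$ is adjacent to no vertex other than $E_1$ and $E_1$ is adjacent to at most one vertex other than $E_0$. The matrix $Y$ representing $A$ w.r.t. a basis $v_0,\dots,v_d$ satisfies $Av_j=\sum_iY_{ij}v_i$. An eigenvalue $\theta$ of $A$ is normalizing if some basis with $v_i\in E^*_iV$ makes every row sum of the matrix representing $A$ equal to $\theta$; $E_i$ is normalizing if $\theta_i$ is. *)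

From HB Require Import structures.
From mathcomp Require Import all_boot all_order all_algebra.
Set Implicit Arguments. Unset Strict Implicit. Unset Printing Implicit Defensive.
Import Order.TTheory GRing.Theory Num.Theory.
Local Open Scope ring_scope.

(* V = 'cV[F]_(d.+1) (column vectors), End(V) = 'M[F]_(d.+1), acting by A *m v. *)

Definition orth_idem_system (F : fieldType) (n : nat) (Es : 'I_n -> 'M[F]_n) : Prop :=
  (forall i j, Es i *m Es j = if i == j then Es i else 0) /\
  (forall i, \rank (Es i) = 1%N).

Definition mult_free_eigs (F : fieldType) (n : nat) (A : 'M[F]_n) (th : 'I_n -> F) : Prop :=
  injective th /\ (forall i, eigenvalue A (th i)).

Definition primitive_idempotents (F : fieldType) (n : nat) (A : 'M[F]_n)
    (th : 'I_n -> F) (E : 'I_n -> 'M[F]_n) : Prop :=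
  forall i j (v : 'cV[F]_n), A *m v = th j *: v ->
    E i *m v = if i == j then v else 0.

Definition bipartite (F : fieldType) (n : nat) (A : 'M[F]_n) (Es : 'I_n -> 'M[F]_n) : Prop :=
  forall i, \tr (Es i *m A) = 0.

Definition Delta_adj (F : fieldType) (n : nat) (E : 'I_n -> 'M[F]_n) (As : 'M[F]_n)
    (i j : 'I_n) : Prop :=
  i != j /\ E i *m As *m E j != 0.

Definition is_tail (F : fieldType) (n : nat) (E : 'I_n -> 'M[F]_n) (As : 'M[F]_n)
    (a b : 'I_n) : Prop :=
  (forall k, Delta_adj E As a k -> k = b) /\
  (forall k l, k != a -> l != a -> Delta_adj E As b k -> Delta_adj E As b l -> k = l).

(* theta is normalizing: some basis v_0..v_d (columns of P) with v_i in E*_i V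
   such that the matrix Y representing A (A v_j = sum_i Y_ij v_i) has all row sums theta *)
Definition normalizing (F : fieldType) (n : nat) (A : 'M[F]_n) (Es : 'I_n -> 'M[F]_n)
    (theta : F) : Prop :=
  exists (P Y : 'M[F]_n),
    P \in unitmx /\
    (forall i, Es i *m col i P = col i P) /\
    A *m P = P *m Y /\
    (forall i, \sum_j Y i j = theta).

(* In the basis v_0, ..., v_d given by normalization, A is represented by a
   tridiagonal matrix Y with zero diagonal and constant row sums theta_0, so the
   all-ones vector is a theta_0-eigenvector of Y, while A* becomes the diagonal
   matrix D of the theta*_i.  Working in the eigenbasis of Y, the tail condition
   says that D maps E_0V into E_0V + E_1V and E_1V into E_0V + E_1V + E_2V (the
   zero pattern of A* in that basis is symmetric because Y is symmetrizable by a
   diagonal matrix).  Peeling off components then turns D 1 and D^2 1 into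
   eigenvectors (theta*_j - lam)_j and (theta*_j^2 + al theta*_j + be)_j of Y for
   theta_1 and theta_2.  Writing the three eigenvector equations in rows 0, i and
   d of Y and eliminating lam, al, be and the two entries of row i gives the
   identity. *)

From HB Require Import structures.
From mathcomp Require Import all_boot all_order all_algebra.
From mathcomp Require Import ring zify.
Import Order.TTheory GRing.Theory Num.Theory.
Local Open Scope ring_scope.
Set Implicit Arguments. Unset Strict Implicit. Unset Printing Implicit Defensive.

Section Conjugation.
Variables (F : fieldType) (n : nat).
Implicit Types (W X : 'M[F]_n).

Lemma mulmx_deltaE m p (X : 'M[F]_(m, n)) (i : 'I_n) (j : 'I_p) r c :
  (X *m delta_mx i j) r c = (c == j)%:R * X r i.
Proof.
rewrite mxE (bigD1 i) //= big1 ?addr0 => [|l /negbTE nl]; rewrite !mxE ?nl //=.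
  by rewrite eqxx /= mulrC.
by rewrite mulr0.
Qed.

Lemma delta_mulmxE m p (X : 'M[F]_(n, p)) (i : 'I_m) (j : 'I_n) r c :
  (delta_mx i j *m X) r c = (r == i)%:R * X j c.
Proof.
rewrite mxE (bigD1 j) //= big1 ?addr0 => [|l /negbTE nl]; rewrite !mxE ?nl ?andbF ?mul0r //=.
by rewrite eqxx andbT.
Qed.

Lemma entry_subZ m p (X Z : 'M[F]_(m, p)) a r c : (X - a *: Z) r c = X r c - a * Z r c.
Proof. by rewrite !mxE. Qed.

Lemma delta_mul_delta X k j :
  delta_mx k k *m X *m delta_mx j j = X k j *: delta_mx k j.
Proof.
apply/matrixP=> r c; rewrite mulmx_deltaE delta_mulmxE !mxE.
by case: (r == k); case: (c == j); rewrite /= ?mul1r ?mul0r ?mulr0 ?mulr1.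
Qed.

Lemma mxtrace_delta_mul X k : \tr (delta_mx k k *m X) = X k k.
Proof.
rewrite /mxtrace (bigD1 k) //= big1 ?addr0 => [|l /negbTE lk].
  by rewrite delta_mulmxE eqxx mul1r.
by rewrite delta_mulmxE lk mul0r.
Qed.

Variables (W W' : 'M[F]_n).
Hypothesis W'W : W' *m W = 1%:M.

Lemma conj_eq0 X : (W *m X *m W' == 0) = (X == 0).
Proof.
apply/eqP/eqP=> [h|->]; last by rewrite mulmx0 mul0mx.
have := congr1 (fun M => W' *m M *m W) h.
by rewrite !mulmxA W'W mul1mx -mulmxA W'W mulmx1 mulmx0 mul0mx.
Qed.

Lemma conj_delta_mul X k j :
  (W *m delta_mx k k *m W') *m (W *m X *m W') *m (W *m delta_mx j j *m W')
  = W *m (X k j *: delta_mx k j) *m W'.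
Proof.
have cancel_mid M Z : M *m W' *m W *m Z = M *m Z by rewrite -(mulmxA M) W'W mulmx1.
by rewrite -delta_mul_delta !mulmxA !cancel_mid.
Qed.

Lemma conj_delta_mul_eq0 X k j :
  ((W *m delta_mx k k *m W') *m (W *m X *m W') *m (W *m delta_mx j j *m W') == 0)
  = (X k j == 0).
Proof.
rewrite conj_delta_mul conj_eq0 scaler_eq0.
suff /negbTE -> : delta_mx k j != 0 :> 'M[F]_n by rewrite orbF.
by apply/eqP => /matrixP /(_ k j); rewrite !mxE !eqxx => /eqP; rewrite oner_eq0.
Qed.

Lemma mxtrace_conj_delta_mul X k :
  \tr ((W *m delta_mx k k *m W') *m (W *m X *m W')) = X k k.
Proof.
rewrite !mulmxA -(mulmxA (W *m _)) W'W mulmx1 mxtrace_mulC !mulmxA W'W mul1mx.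
exact: mxtrace_delta_mul.
Qed.

Lemma projections_conj_delta (E : 'I_n -> 'M[F]_n) :
  (forall i j, E i *m col j W = if i == j then col j W else 0) ->
  forall k, E k = W *m delta_mx k k *m W'.
Proof.
move=> hE k; rewrite -[E k]mulmx1 -(mulmx1C W'W) mulmxA; congr (_ *m _).
apply/matrixP=> r c; rewrite mulmx_deltaE.
have -> : (E k *m W) r c = (E k *m col c W) r 0 by rewrite colE mulmxA mulmx_deltaE eqxx mul1r.
rewrite hE eq_sym; case: eqP => [->|_]; first by rewrite mul1r mxE.
by rewrite mul0r mxE.
Qed.

End Conjugation.

Section EigenCoordinates.
Variables (F : fieldType) (n : nat) (Y : 'M[F]_n) (th : 'I_n -> F).
Hypothesis th_inj : injective th.
Local Notation Th := (diag_mx (\row_i th i)).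

Lemma eigenrows_unitmx (N : 'M[F]_n) :
  (forall i, row i N *m Y = th i *: row i N) -> (forall i, row i N != 0) -> N \in unitmx.
Proof.
move=> NY N_neq0; rewrite -row_free_unit -kermx_eq0.
apply/idPn => /rowV0Pn [c /sub_kermxP cN c_neq0].
have [j cj] : exists j, c 0 j != 0.
  apply/existsP; apply: contraR c_neq0 => /existsPn c0; apply/eqP/rowP => k.
  by rewrite mxE; apply/eqP; rewrite -[_ == _]negbK c0.
have /mxdirect_sumsP /(_ j isT) eig_cap0 := mxdirect_sum_eigenspace Y (P := predT) (in2W th_inj).
suff : (row j N <= eigenspace Y (th j)
          :&: \sum_(i | predT i && (i != j)) eigenspace Y (th i))%MS.
  by rewrite eig_cap0 submx0 (negbTE (N_neq0 j)).
rewrite sub_capmx; apply/andP; split; first exact/eigenspaceP.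
move: cN; rewrite mulmx_sum_row (bigD1 j) //= => /eqP; rewrite addr_eq0 => /eqP cNj.
have -> : row j N = (c 0 j)^-1 *: (- \sum_(i < n | i != j) c 0 i *: row i N).
  by rewrite -cNj scalerA mulVf // scale1r.
apply/scalemx_sub; rewrite -scaleN1r; apply/scalemx_sub/summx_sub => i ij.
by apply/scalemx_sub/(sumsmx_sup i) => //; apply/eigenspaceP.
Qed.

Lemma left_eigenbasis : (forall i, eigenvalue Y (th i)) ->
  exists2 N : 'M[F]_n, N \in unitmx & N *m Y = Th *m N.
Proof.
move=> eigY; have /fin_all_exists2 [v vY v_neq0] := fun i => eigenvalueP (eigY i).
have rowN i : row i (\matrix_i v i) = v i by rewrite rowK.
exists (\matrix_i v i); first by apply: eigenrows_unitmx => i; rewrite rowN.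
apply/row_matrixP => i; rewrite row_mul rowN vY mul_diag_mx.
by apply/rowP => j; rewrite !mxE.
Qed.

Lemma commute_diag_offdiag (G : 'M[F]_n) :
  Th *m G = G *m Th -> forall a b, a != b -> G a b = 0.
Proof.
move=> /matrixP ThG a b; apply: contraNeq => Gab; apply/eqP/th_inj.
by move: (ThG a b); rewrite mul_diag_mx mul_mx_diag !mxE mulrC => /(mulfI Gab).
Qed.

Variables (N : 'M[F]_n).
Hypotheses (N_unit : N \in unitmx) (NY : N *m Y = Th *m N).
Implicit Types (x y : 'cV[F]_n).

(* The entries of [N *m x] are the coordinates of [x] in the eigenbasis of [Y]
   formed by the columns of [invmx N]. *)
Definition coord_support (x : 'cV[F]_n) (S : pred 'I_n) :=
  forall k, ~~ S k -> (N *m x) k 0 = 0.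

Lemma coord_mulmx x k : (N *m (Y *m x)) k 0 = th k * (N *m x) k 0.
Proof. by rewrite mulmxA NY -mulmxA mul_diag_mx !mxE. Qed.

Lemma coord_support0 x : coord_support x pred0 -> x = 0.
Proof.
move=> x0; rewrite -(mulKmx N_unit x); suff -> : N *m x = 0 by rewrite mulmx0.
by apply/colP => k; rewrite x0 ?mxE.
Qed.

Lemma eigvec_supportP x a : Y *m x = th a *: x <-> coord_support x (pred1 a).
Proof.
split=> [Yx k /= ka | xa].
  have /eqP := coord_mulmx x k; rewrite Yx -scalemxAr mxE -subr_eq0 -mulrBl mulf_eq0.
  by rewrite subr_eq0 (inj_eq th_inj) eq_sym (negbTE ka) => /eqP.
apply: (can_inj (mulKmx N_unit)); apply/colP => k.
rewrite coord_mulmx -scalemxAr [RHS]mxE.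
by have [->|/xa ->] := eqVneq k a; rewrite ?mulr0.
Qed.

Lemma coord_support1_neq0 x a : coord_support x (pred1 a) -> x != 0 -> (N *m x) a 0 != 0.
Proof.
move=> xa; apply: contraNneq => xa0; apply/eqP/coord_support0 => k _.
by have [->|/xa] := eqVneq k a.
Qed.

Lemma coord_support_peel x y b (S : pred 'I_n) :
  coord_support x (predU1 b S) -> coord_support y (pred1 b) -> (N *m y) b 0 != 0 ->
  coord_support (x - ((N *m x) b 0 / (N *m y) b 0) *: y) S.
Proof.
move=> xbS yb yb0 k kS; rewrite mulmxBr -scalemxAr entry_subZ.
have [->|kb] := eqVneq k b; first by rewrite divfK ?subrr.
by rewrite (xbS k) ?(yb k) ?mulr0 ?subrr // negb_or kb.
Qed.

Variable ths : 'I_n -> F.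
Local Notation Ds := (diag_mx (\row_i ths i)).
Local Notation Bs := (N *m Ds *m invmx N).

Lemma coord_support_diag_mul x (S T : pred 'I_n) :
  (forall k l, ~~ T k -> S l -> Bs k l = 0) ->
  coord_support x S -> coord_support (Ds *m x) T.
Proof.
move=> B0 xS k kT.
have -> : N *m (Ds *m x) = Bs *m (N *m x) by rewrite !mulmxA mulmxKV.
rewrite mxE big1 // => l _.
have [Sl|nSl] := boolP (S l); first by rewrite B0 ?mul0r.
by rewrite (xS l nSl) mulr0.
Qed.

Lemma tail_eigenvectors (i0 i1 i2 : 'I_n) :
  injective ths -> i0 != i1 ->
  Y *m const_mx 1 = th i0 *: (const_mx 1 : 'cV[F]_n) ->
  (forall k, k != i0 -> k != i1 -> Bs k i0 = 0) ->
  (forall k, k != i0 -> k != i1 -> k != i2 -> Bs k i1 = 0) ->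
  exists lam al be,
    Y *m \col_j (ths j - lam) = th i1 *: \col_j (ths j - lam) /\
    Y *m \col_j (ths j ^+ 2 + al * ths j + be)
      = th i2 *: \col_j (ths j ^+ 2 + al * ths j + be).
Proof.
move=> ths_inj i01 Y1 B0 B1; set one : 'cV[F]_n := const_mx 1.
have one_supp : coord_support one (pred1 i0) by apply/eigvec_supportP.
have one_coord : (N *m one) i0 0 != 0.
  apply: coord_support1_neq0 one_supp _.
  by apply/eqP => /colP /(_ i0) /eqP; rewrite !mxE oner_eq0.
have Done_supp : coord_support (Ds *m one) (predU1 i0 (pred1 i1)).
  by apply: coord_support_diag_mul one_supp => k l /= /norP [k0 k1] /eqP ->; apply: B0.
pose lam := (N *m (Ds *m one)) i0 0 / (N *m one) i0 0.
pose x1 := Ds *m one - lam *: one.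
have x1_supp : coord_support x1 (pred1 i1) := coord_support_peel Done_supp one_supp one_coord.
have x1E : x1 = \col_j (ths j - lam).
  by apply/colP => j; rewrite /x1 entry_subZ (mul_diag_mx _ one) !mxE !mulr1.
have x1_coord : (N *m x1) i1 0 != 0.
  apply: coord_support1_neq0 x1_supp _; rewrite x1E; apply/eqP => /colP x10.
  move: (x10 i0) (x10 i1); rewrite !mxE => /eqP + /eqP.
  by rewrite !subr_eq0 => /eqP <- /eqP /ths_inj /eqP; rewrite eq_sym (negbTE i01).
have Dx1_supp : coord_support (Ds *m x1) (predU1 i1 (predU1 i0 (pred1 i2))).
  apply: coord_support_diag_mul x1_supp => k l /= /norP [k1 /norP [k0 k2]] /eqP ->.
  exact: B1.
pose mu := (N *m (Ds *m x1)) i1 0 / (N *m x1) i1 0.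
have x2'_supp : coord_support (Ds *m x1 - mu *: x1) (predU1 i0 (pred1 i2)) :=
  coord_support_peel Dx1_supp x1_supp x1_coord.
pose nu := (N *m (Ds *m x1 - mu *: x1)) i0 0 / (N *m one) i0 0.
have x2_supp : coord_support (Ds *m x1 - mu *: x1 - nu *: one) (pred1 i2) :=
  coord_support_peel x2'_supp one_supp one_coord.
exists lam, (- (lam + mu)), (mu * lam - nu); split.
  by rewrite -x1E; apply/eigvec_supportP.
have <- : Ds *m x1 - mu *: x1 - nu *: one
          = \col_j (ths j ^+ 2 + - (lam + mu) * ths j + (mu * lam - nu)).
  by apply/colP => j; rewrite x1E !entry_subZ mul_diag_mx !mxE; ring.
exact/eigvec_supportP.
Qed.

Lemma conj_diag_zero_sym (l : 'rV[F]_n) :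
  (forall j, l 0 j != 0) -> Y *m diag_mx l = diag_mx l *m Y^T ->
  forall k j, Bs k j = 0 -> Bs j k = 0.
Proof.
(* G := N L N^T commutes with diag th, hence is diagonal, and B G = N (D L) N^T
   is symmetric. *)
move=> l_neq0 YL; set L := diag_mx l.
have ThG : Th *m (N *m L *m N^T) = (N *m L *m N^T) *m Th.
  rewrite !mulmxA -NY -!mulmxA [Y *m _]mulmxA YL !mulmxA.
  by rewrite -!mulmxA -trmx_mul NY trmx_mul tr_diag_mx !mulmxA.
have [g G_diag g_neq0] : exists2 g : 'rV_n, N *m L *m N^T = diag_mx g & forall a, g 0 a != 0.
  have G_unit : N *m L *m N^T \in unitmx.
    rewrite !unitmx_mul unitmx_tr N_unit unitmxE det_diag unitfE andbT /=.
    by apply/prodf_neq0 => i _; apply: l_neq0.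
  move: (N *m L *m N^T) ThG G_unit => G ThG G_unit.
  have G_diag : G = diag_mx (\row_i G i i).
    apply/matrixP => a b; rewrite !mxE.
    by have [->|ab] := eqVneq a b; rewrite ?mulr1n // (commute_diag_offdiag ThG ab).
  exists (\row_i G i i) => // a; move: G_unit.
  by rewrite {1}G_diag unitmxE det_diag unitfE => /prodf_neq0 /(_ a isT).
have BG_sym : (Bs *m diag_mx g)^T = Bs *m diag_mx g.
  have -> : Bs *m diag_mx g = N *m (Ds *m L) *m N^T.
    by rewrite -G_diag -!mulmxA (mulmxA (invmx N)) mulVmx // mul1mx.
  by rewrite !trmx_mul trmxK /L !tr_diag_mx diag_mx_comm !mulmxA.
move=> k j; move: (Bs) BG_sym => B /matrixP /(_ j k) BG_sym Bkj.
move: BG_sym; rewrite !mul_mx_diag !mxE Bkj mul0r => /esym /eqP.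
by rewrite mulf_eq0 (negbTE (g_neq0 k)) orbF => /eqP.
Qed.

End EigenCoordinates.

Lemma three_eigvec_identity (F : fieldType) (t0 t1 t2 lam al be x y P Q R S0 S1 Sm Sd : F) :
  x + y = t0 ->
  t0 * (S1 - lam) = t1 * (S0 - lam) ->
  t0 * (Sm - lam) = t1 * (Sd - lam) ->
  x * (P - lam) + y * (R - lam) = t1 * (Q - lam) ->
  t0 * (S1 ^+ 2 + al * S1 + be) = t2 * (S0 ^+ 2 + al * S0 + be) ->
  t0 * (Sm ^+ 2 + al * Sm + be) = t2 * (Sd ^+ 2 + al * Sd + be) ->
  x * (P ^+ 2 + al * P + be) + y * (R ^+ 2 + al * R + be) = t2 * (Q ^+ 2 + al * Q + be) ->
  S0 != Sd ->
  t0 * (R - S1) * (P - S1) + t1 * (Q - S0) * (Sm - R - P + S1) - t2 * (Q - S0) * (Sd - Q) = 0.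
Proof.
move=> e0 e1 e2 e3 e4 e5 e6 S0d.
(* (Sd - S0) times the goal is a combination of the seven hypotheses. *)
have key : (Sd - S0) * (t0 * (R - S1) * (P - S1) + t1 * (Q - S0) * (Sm - R - P + S1)
                        - t2 * (Q - S0) * (Sd - Q)) =
  - (Sd - S0) * (
      (x * (P ^+ 2 + al * P + be) + y * (R ^+ 2 + al * R + be) - t2 * (Q ^+ 2 + al * Q + be))
    - (al + P + R) * (x * (P - lam) + y * (R - lam) - t1 * (Q - lam))
    - (al * lam + be + (P + R) * lam - P * R) * (x + y - t0)
    - (t0 * (S1 ^+ 2 + al * S1 + be) - t2 * (S0 ^+ 2 + al * S0 + be))
    + (al + P + R) * (t0 * (S1 - lam) - t1 * (S0 - lam)))
  + (Q - S0) * ((t0 * (Sm ^+ 2 + al * Sm + be) - t2 * (Sd ^+ 2 + al * Sd + be))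
              - (t0 * (S1 ^+ 2 + al * S1 + be) - t2 * (S0 ^+ 2 + al * S0 + be)))
  - (Q - S0) * (al + Sm + S1) * ((t0 * (Sm - lam) - t1 * (Sd - lam))
                                - (t0 * (S1 - lam) - t1 * (S0 - lam))).
  ring.
move: key; rewrite e0 e1 e2 e3 e4 e5 e6 !subrr !(mulr0, subr0, addr0, oppr0) => /eqP.
by rewrite mulf_eq0 subr_eq0 eq_sym (negbTE S0d) => /eqP.
Qed.

Section Tridiagonal.
Variables (F : fieldType) (d : nat) (Y : 'M[F]_d.+1).
Hypothesis Y_tridiag : forall i j : 'I_d.+1, ((i.+1 < j) || (j.+1 < i))%N -> Y i j = 0.

(* Consecutive weights have ratio Y_(m+1,m) / Y_(m,m+1), which makes
   Y *m diag_mx l symmetric. *)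
Fixpoint symmetrizer_weight (m : nat) : F :=
  if m is m'.+1 then
    symmetrizer_weight m' * Y (inord m) (inord m') / Y (inord m') (inord m)
  else 1.

Lemma tridiag_symmetrizer :
  (forall i j : 'I_d.+1, ((i.+1 == j) || (j.+1 == i))%N -> Y i j != 0) ->
  exists2 l : 'rV[F]_d.+1, forall j, l 0 j != 0 & Y *m diag_mx l = diag_mx l *m Y^T.
Proof.
move=> Y_neq0; have w_neq0 m : (m <= d)%N -> symmetrizer_weight m != 0.
  elim: m => [|m IHm] m_le /=; first exact: oner_neq0.
  by rewrite !mulf_neq0 ?invr_eq0 ?IHm ?Y_neq0 // ?inordK; lia.
exists (\row_j symmetrizer_weight j) => [j|]; first by rewrite mxE w_neq0 // -ltnS.
apply/matrixP => i j; rewrite mul_mx_diag mul_diag_mx !mxE.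
have [->|ij] := eqVneq i j; first by rewrite mulrC.
have [ji|ji] := eqVneq (val j) i.+1.
  have -> : symmetrizer_weight j = symmetrizer_weight i * Y j i / Y i j.
    by rewrite ji /= -ji !inord_val.
  have Yij : Y i j != 0 by rewrite Y_neq0 // ji eqxx.
  by field.
have [ij'|ij'] := eqVneq (val i) j.+1.
  have -> : symmetrizer_weight i = symmetrizer_weight j * Y i j / Y j i.
    by rewrite ij' /= -ij' !inord_val.
  have Yji : Y j i != 0 by rewrite Y_neq0 // ij' eqxx.
  by field.
rewrite !Y_tridiag ?mul0r ?mulr0 //; move: ij ji ij'; rewrite -(inj_eq val_inj) /=;
  move=> /eqP ij /eqP ji /eqP ij'; apply/orP; lia.
Qed.

Hypothesis Y_diag0 : forall i, Y i i = 0.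

Lemma tridiag_entry0 (r l : 'I_d.+1) : l.+1 != r -> r.+1 != l -> Y r l = 0.
Proof.
move=> lr rl; have [->|rl'] := eqVneq r l; first exact: Y_diag0.
apply: Y_tridiag; move: lr rl rl'; rewrite -(inj_eq val_inj) /=.
by move=> /eqP lr /eqP rl /eqP rl'; apply/orP; lia.
Qed.

Implicit Type x : 'cV[F]_d.+1.

Lemma tridiag_row_first x : (0 < d)%N ->
  (Y *m x) (inord 0) 0 = Y (inord 0) (inord 1) * x (inord 1) 0.
Proof.
move=> d_gt0; rewrite mxE (bigD1 (inord 1)) //= big1 ?addr0 // => l l1.
rewrite tridiag_entry0 ?mul0r //; move: l1; rewrite -(inj_eq val_inj) /= !inordK //.
lia.
Qed.

Lemma tridiag_row_last x : (0 < d)%N ->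
  (Y *m x) (inord d) 0 = Y (inord d) (inord d.-1) * x (inord d.-1) 0.
Proof.
move=> d_gt0; rewrite mxE (bigD1 (inord d.-1)) //= big1 ?addr0 // => l l1.
rewrite tridiag_entry0 ?mul0r //; move: (ltn_ord l) l1; rewrite -(inj_eq val_inj) /= !inordK //; lia.
Qed.

Lemma tridiag_row_mid x i : (0 < i < d)%N ->
  (Y *m x) (inord i) 0
  = Y (inord i) (inord i.-1) * x (inord i.-1) 0 + Y (inord i) (inord i.+1) * x (inord i.+1) 0.
Proof.
move=> i_mid; have i_ne : (inord i.-1 : 'I_d.+1) != inord i.+1.
  by rewrite -(inj_eq val_inj) /= !inordK //; lia.
rewrite mxE (bigD1 (inord i.-1)) // (bigD1 (inord i.+1)) /=; last by rewrite eq_sym.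
rewrite big1 ?addr0 // => l /andP [l1 l2].
rewrite tridiag_entry0 ?mul0r //; move: l1 l2; rewrite -!(inj_eq val_inj) /= !inordK //; lia.
Qed.

Lemma tridiag_eigvec_identity (t0 t1 t2 lam al be : F) (ths : 'I_d.+1 -> F) :
  (2 <= d)%N -> ths (inord 0) != ths (inord d) ->
  Y *m const_mx 1 = t0 *: (const_mx 1 : 'cV[F]_d.+1) ->
  Y *m \col_j (ths j - lam) = t1 *: \col_j (ths j - lam) ->
  Y *m \col_j (ths j ^+ 2 + al * ths j + be) = t2 *: \col_j (ths j ^+ 2 + al * ths j + be) ->
  forall i : nat, (1 <= i <= d.-1)%N ->
    t0 * (ths (inord i.+1) - ths (inord 1)) * (ths (inord i.-1) - ths (inord 1))
    + t1 * (ths (inord i) - ths (inord 0))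
        * (ths (inord d.-1) - ths (inord i.+1) - ths (inord i.-1) + ths (inord 1))
    - t2 * (ths (inord i) - ths (inord 0)) * (ths (inord d) - ths (inord i))
    = 0.
Proof.
move=> d_ge2 S0d Y0 Y1 Y2 i /andP [i_ge1 i_le].
have rows (v : 'cV[F]_d.+1) t : Y *m v = t *: v -> [/\
    Y (inord 0) (inord 1) * v (inord 1) 0 = t * v (inord 0) 0,
    Y (inord d) (inord d.-1) * v (inord d.-1) 0 = t * v (inord d) 0 &
    Y (inord i) (inord i.-1) * v (inord i.-1) 0 + Y (inord i) (inord i.+1) * v (inord i.+1) 0
      = t * v (inord i) 0].
  move=> Yv; have e r : (Y *m v) r 0 = t * v r 0 by rewrite Yv mxE.
  split; [rewrite -tridiag_row_first | rewrite -tridiag_row_last | rewrite -tridiag_row_mid];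
    by rewrite ?e //; lia.
have [a0 ad ai] := rows _ _ Y0; have [b0 bd bi] := rows _ _ Y1; have [c0 cd ci] := rows _ _ Y2.
rewrite !mxE !mulr1 in a0 ad ai b0 bd bi c0 cd ci.
rewrite a0 in b0 c0; rewrite ad in bd cd.
exact: three_eigvec_identity ai b0 bd bi c0 cd ci S0d.
Qed.
End Tridiagonal.

Section NormalizingCoordinates.
Variables (F : fieldType) (n : nat) (Es : 'I_n -> 'M[F]_n) (A P Y : 'M[F]_n).
Hypotheses (Es_orth : forall i j, Es i *m Es j = if i == j then Es i else 0)
  (P_unit : P \in unitmx) (P_cols : forall i, Es i *m col i P = col i P)
  (AP : A *m P = P *m Y).

Let P'P : invmx P *m P = 1%:M. Proof. exact: mulVmx. Qed.
Let A_conj : A = P *m Y *m invmx P. Proof. by rewrite -AP mulmxK. Qed.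

Lemma Es_conj k : Es k = P *m delta_mx k k *m invmx P.
Proof.
apply: (projections_conj_delta P'P) => i j; rewrite -{1}(P_cols j) mulmxA Es_orth.
by case: eqP => [->|_]; [exact: P_cols | exact: mul0mx].
Qed.

Lemma Es_A_Es_eq0 k j : (Es k *m A *m Es j == 0) = (Y k j == 0).
Proof. by rewrite A_conj !Es_conj conj_delta_mul_eq0. Qed.

Lemma mxtrace_Es_A k : \tr (Es k *m A) = Y k k.
Proof. by rewrite A_conj Es_conj mxtrace_conj_delta_mul. Qed.

Lemma eigenvalue_coords a : eigenvalue A a -> eigenvalue Y a.
Proof.
rewrite A_conj -conjumx //.
by apply: (eigenvalue_conjmx (stablemx_unit _ P_unit)); rewrite row_free_unit.
Qed.

Variables (E : 'I_n -> 'M[F]_n) (N : 'M[F]_n) (th ths : 'I_n -> F).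
Hypotheses (N_unit : N \in unitmx) (NY : N *m Y = diag_mx (\row_i th i) *m N)
  (E_proj : primitive_idempotents A th E).

Let W'W : N *m invmx P *m (P *m invmx N) = 1%:M.
Proof. by rewrite mulmxA mulmxKV // mulmxV. Qed.

Lemma E_conj k : E k = P *m invmx N *m delta_mx k k *m (N *m invmx P).
Proof.
have AW : A *m (P *m invmx N) = P *m invmx N *m diag_mx (\row_i th i).
  by rewrite mulmxA AP -[Y](mulKmx N_unit) NY !mulmxA mulmxK.
apply: (projections_conj_delta W'W) => i j; apply: E_proj; apply/colP => r.
rewrite colE mulmxA AW [RHS]mxE !mulmx_deltaE eqxx !mul1r mul_mx_diag.
by rewrite [LHS]mxE [X in _ * X]mxE mulrC.
Qed.

Lemma E_dual_E_eq0 a k :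
  (E a *m (\sum_i ths i *: Es i) *m E k == 0)
  = ((N *m diag_mx (\row_i ths i) *m invmx N) a k == 0).
Proof.
have -> : \sum_i ths i *: Es i
          = P *m invmx N *m (N *m diag_mx (\row_i ths i) *m invmx N) *m (N *m invmx P).
  rewrite !mulmxA !mulmxKV // diag_mx_sum_delta mulmx_sumr mulmx_suml.
  by apply: eq_bigr => i _; rewrite Es_conj -scalemxAr -scalemxAl mxE.
by rewrite !E_conj conj_delta_mul_eq0.
Qed.

End NormalizingCoordinates.

Lemma inord_neq n (a b : nat) : (a <= n)%N -> (b <= n)%N -> a != b ->
  (inord a : 'I_n.+1) != inord b.
Proof. by move=> an bn; rewrite -(inj_eq val_inj) /= !inordK. Qed.

Lemma tail_zero_pattern (F : fieldType) n (E : 'I_n -> 'M[F]_n) (As B : 'M[F]_n)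
    (a b c : 'I_n) :
  (forall i j, (E i *m As *m E j == 0) = (B i j == 0)) ->
  is_tail E As a b -> Delta_adj E As b c -> c != a ->
  (forall k, k != a -> k != b -> B a k = 0) /\
  (forall k, k != a -> k != b -> k != c -> B b k = 0).
Proof.
move=> EAsE [tail_a tail_b] adj_bc ca; split=> [k ka kb | k ka kb kc].
  apply/eqP; rewrite -EAsE; apply: contraNT kb => Eak.
  by apply/eqP/tail_a; split=> //; rewrite eq_sym.
apply/eqP; rewrite -EAsE; apply: contraNT kc => Ebk.
have adj_bk : Delta_adj E As b k by split=> //; rewrite eq_sym.
by rewrite (tail_b _ _ ka ca adj_bk adj_bc).
Qed.

Theorem proposition8p4 (F : fieldType) (d : nat) (hd : (3 <= d)%N)
    (Es : 'I_d.+1 -> 'M[F]_d.+1) (A : 'M[F]_d.+1)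
    (th : 'I_d.+1 -> F) (E : 'I_d.+1 -> 'M[F]_d.+1) (ths : 'I_d.+1 -> F) :
  orth_idem_system Es ->
  (forall i j : 'I_d.+1, ((i.+1 < j) || (j.+1 < i))%N -> Es i *m A *m Es j = 0) ->
  (forall i j : 'I_d.+1, ((i.+1 == j) || (j.+1 == i))%N -> Es i *m A *m Es j != 0) ->
  mult_free_eigs A th ->
  primitive_idempotents A th E ->
  bipartite A Es ->
  injective ths ->
  let As := \sum_i ths i *: Es i in
  normalizing A Es (th (inord 0)) ->
  is_tail E As (inord 0) (inord 1) ->
  Delta_adj E As (inord 1) (inord 2) ->
  forall i : nat, (1 <= i <= d.-1)%N ->
    th (inord 0) * (ths (inord i.+1) - ths (inord 1)) * (ths (inord i.-1) - ths (inord 1))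
    + th (inord 1) * (ths (inord i) - ths (inord 0))
        * (ths (inord d.-1) - ths (inord i.+1) - ths (inord i.-1) + ths (inord 1))
    - th (inord 2) * (ths (inord i) - ths (inord 0)) * (ths (inord d) - ths (inord i))
    = 0.
Proof.
move=> [Es_orth _] A_far A_adj [th_inj th_eig] E_proj A_bip ths_inj As
  [P [Y [P_unit [P_cols [AP Y_rows]]]]] tail adj12.
have EsAEs := Es_A_Es_eq0 Es_orth P_unit P_cols AP.
have Y_far (i j : 'I_d.+1) : ((i.+1 < j) || (j.+1 < i))%N -> Y i j = 0.
  by move=> /A_far /eqP; rewrite EsAEs => /eqP.
have Y_adj (i j : 'I_d.+1) : ((i.+1 == j) || (j.+1 == i))%N -> Y i j != 0.
  by move=> /A_adj; rewrite EsAEs.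
have Y_diag0 k : Y k k = 0 by rewrite -(mxtrace_Es_A Es_orth P_unit P_cols AP) A_bip.
have Y1 : Y *m const_mx 1 = th (inord 0) *: (const_mx 1 : 'cV[F]_d.+1).
  by apply/colP => j; rewrite !mxE mulr1 -(Y_rows j); apply: eq_bigr => l _; rewrite mxE mulr1.
have [N N_unit NY] := left_eigenbasis th_inj (fun i => eigenvalue_coords P_unit AP (th_eig i)).
have [i01 i20 i0d] : [/\ inord 0 != inord 1 :> 'I_d.+1, inord 2 != inord 0 :> 'I_d.+1
                         & inord 0 != inord d :> 'I_d.+1].
  by split; apply: inord_neq; lia.
have [B0 B1] := tail_zero_pattern
  (E_dual_E_eq0 Es_orth P_unit P_cols AP ths N_unit NY E_proj) tail adj12 i20.
have [l l_neq0 YL] := tridiag_symmetrizer Y_far Y_adj.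
have B_sym := conj_diag_zero_sym th_inj N_unit NY (ths := ths) l_neq0 YL.
have [lam [al [be [Y_eig1 Y_eig2]]]] := tail_eigenvectors th_inj N_unit NY ths_inj
  i01 Y1 (fun k k0 k1 => B_sym _ _ (B0 k k0 k1))
  (fun k k0 k1 k2 => B_sym _ _ (B1 k k0 k1 k2)).
have S0d : ths (inord 0) != ths (inord d) by apply: contra_neq i0d; apply: ths_inj.
by apply: (tridiag_eigvec_identity Y_far Y_diag0 _ S0d Y1 Y_eig1 Y_eig2); lia.
Qed.
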